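(* Let $G$ be a graph on vertex set $V=\{1,\ldots,n\}$ and $G_l$ a graph on $V$ with $E(G)\subseteq E(G_l)$. Suppose $A\in\mathcal{S}(G)$, $X\in\overline{\mathcal{S}_0}(G_l^c)$, and $AX-XA=0$. If there exists a vertex $i$ such that the induced subgraph $G_l^c[N_G(i)]$ has a connected component that is a cycle $C$ of odd length, and for each $j\in V(C)$ the pair $\{i,j\}$ is focused on $V(C)$ with respect to $G$ and $G_l$, then $X\in\overline{\mathcal{S}_0}(G_{l+1}^c)$, where $G_{l+1}=G_l+E(C)$.
   Context: All graphs are finite, simple, undirected. For a graph $G$ on $\{1,\ldots,n\}$, $\mathcal{S}(G)$ is the set of real symmetric $n\times n$ matrices $A=(a_{ij})$ with $a_{ij}\neq0$ iff $\{i,j\}\in E(G)$ for $i\neq j$ (diagonal arbitrary). For a graph $H$ on $\{1,\ldots,n\}$, $\overline{\mathcal{S}_0}(H)$ is the set of real symmetric matrices whose $(i,j)$ entry is zero whenever $i=j$ or $\{i,j\}\notin E(H)$; $H^c$ is the complement of $H$. $N_G(i)$ is the (open) set of neighbours of $i$ in $G$, $N_G[i]$ the closed neighbourhood, and $N_G[i]^c$ its complement in $V$; $H[W]$ is the subgraph of $H$ induced on $W$. For nonempty $U\subseteq V$, a pair $\{i,j\}$ is focused on $U$ with respect to $G$ and $G_l$ if $N_G[i]\cap N_{G_l}[j]^c\subseteq U$ and $N_G[j]\cap N_{G_l}[i]^c\subseteq U$. *)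

From HB Require Import structures.
From mathcomp Require Import all_boot all_order all_algebra.
From mathcomp Require Import reals.
Set Implicit Arguments. Unset Strict Implicit. Unset Printing Implicit Defensive.
Import Order.TTheory GRing.Theory Num.Theory.
Local Open Scope ring_scope.

(* Graphs on V = {1..n} are represented on 'I_n by a relation. *)
Definition simple_graph n (G : rel 'I_n) : Prop :=
  symmetric G /\ irreflexive G.

Definition gcompl n (H : rel 'I_n) : rel 'I_n := fun i j => (i != j) && ~~ H i j.

Definition edge_sub n (G H : rel 'I_n) : Prop := forall i j, G i j -> H i j.

Definition SG (R : realType) n (G : rel 'I_n) (A : 'M[R]_n) : Prop :=
  A^T = A /\ forall i j, i != j -> (A i j != 0) = G i j.

Definition S0bar (R : realType) n (H : rel 'I_n) (X : 'M[R]_n) : Prop :=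
  X^T = X /\ forall i j, (i == j) || ~~ H i j -> X i j = 0.

Definition nbhd n (G : rel 'I_n) (i : 'I_n) : {set 'I_n} := [set j | G i j].
Definition cnbhd n (G : rel 'I_n) (i : 'I_n) : {set 'I_n} := i |: nbhd G i.

Definition focused n (G Gl : rel 'I_n) (U : {set 'I_n}) (i j : 'I_n) : Prop :=
  (cnbhd G i :&: ~: cnbhd Gl j) \subset U /\
  (cnbhd G j :&: ~: cnbhd Gl i) \subset U.

Definition cyc_adj n (s : seq 'I_n) (x y : 'I_n) : Prop :=
  exists2 t, (t < size s)%N &
    (nth x s t = x /\ nth x s (t.+1 %% size s) = y) \/
    (nth x s t = y /\ nth x s (t.+1 %% size s) = x).

(* The subgraph of H induced on W has a connected component which is the
   cycle on the vertices of s (listed in cyclic order), of odd length. *)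
Definition odd_cycle_component n (H : rel 'I_n) (W : {set 'I_n}) (s : seq 'I_n)
  : Prop :=
  [/\ uniq s, (3 <= size s)%N, odd (size s) & {subset s <= W}] /\
  (forall x y, x \in s -> y \in s -> (H x y <-> cyc_adj s x y)) /\
  (forall x y, x \in s -> y \in W -> y \notin s -> ~~ H x y).

(* G_l + E(C), where E(C) = edges of the cycle C (edges of G_l^c among s) *)
Definition add_cycle_edges n (Gl : rel 'I_n) (s : seq 'I_n) : rel 'I_n :=
  fun x y => Gl x y || [&& x \in s, y \in s & gcompl Gl x y].

From mathcomp Require Import all_boot all_order all_algebra.
From mathcomp Require Import reals.
From mathcomp Require Import ring.

Set Implicit Arguments.
Unset Strict Implicit.
Unset Printing Implicit Defensive.
Import GRing.Theory Num.Theory.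
Local Open Scope ring_scope.

(* Let v_0, ..., v_(m-1) be the odd cycle C and j = v_(t+1).  Since
   C ⊆ N_G(i) ⊆ N_Gl(i), focusing makes (XA)_ij vanish, and in
   (AX)_ij = Σ_k a_ik x_kj only the two cycle neighbours v_t, v_(t+2) of j
   survive.  Hence w_t := a_(i v_t) a_(i v_(t+1)) x_(v_t v_(t+1)) satisfies
   w_(t+1) = -w_t; once around the odd cycle this gives w_t = -w_t, so w_t = 0,
   and x_(v_t v_(t+1)) = 0 because every a_(i v_t) is nonzero. *)

Lemma alternating_periodic_eq0 (R : numDomainType) (f : nat -> R) (m : nat) :
  odd m -> (forall t, f t.+1 = - f t) -> (forall t, f (t + m)%N = f t) ->
  forall t, f t = 0.
Proof.
move=> oddm fS fper t.
have fsign k : f (t + k)%N = (-1) ^+ k * f t.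
  elim: k => [|k IHk]; first by rewrite addn0 mul1r.
  by rewrite addnS fS IHk exprS mulN1r mulNr.
have /eqP : f t = - f t by rewrite -[LHS]fper fsign -signr_odd oddm mulN1r.
by rewrite -subr_eq0 opprK -mulr2n -mulr_natr mulf_eq0 pnatr_eq0 orbF => /eqP.
Qed.

Section CyclicIndexing.

Variables (n : nat) (s : seq 'I_n) (x0 : 'I_n).

(* The default [x0] is never read when [s] is nonempty. *)
Definition cyc_nth (t : nat) : 'I_n := nth x0 s (t %% size s).

Lemma cyc_nthD_size t : cyc_nth (t + size s) = cyc_nth t.
Proof. by rewrite /cyc_nth modnDr. Qed.

Hypothesis s_gt0 : (0 < size s)%N.

Lemma mem_cyc_nth t : cyc_nth t \in s.
Proof. by rewrite mem_nth ?ltn_pmod. Qed.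

Lemma cyc_adj_nth x y :
  cyc_adj s x y ->
  exists t, (x = cyc_nth t /\ y = cyc_nth t.+1) \/ (x = cyc_nth t.+1 /\ y = cyc_nth t).
Proof.
case=> t t_lt; rewrite !(set_nth_default x0) ?ltn_pmod // => -[[<- <-]|[<- <-]];
  exists t; rewrite /cyc_nth (modn_small t_lt); first [by left | by right].
Qed.

Hypothesis s_uniq : uniq s.

Lemma cyc_nth_inj t u : cyc_nth t = cyc_nth u -> t = u %[mod size s].
Proof. by move/eqP; rewrite nth_uniq ?ltn_pmod // => /eqP. Qed.

Lemma cyc_adj_nthS x t : cyc_adj s x (cyc_nth t.+1) -> x = cyc_nth t \/ x = cyc_nth t.+2.
Proof.
case/cyc_adj_nth => u [[-> /cyc_nth_inj]|[-> /cyc_nth_inj]].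
- rewrite -(addn1 t) -(addn1 u) => /eqP; rewrite eqn_modDr => /eqP Eu.
  by left; rewrite /cyc_nth Eu.
- by move=> Eu; right; rewrite /cyc_nth -(addn1 u) -modnDml -Eu modnDml addn1.
Qed.

Lemma cyc_nth_neqS2 t : (3 <= size s)%N -> cyc_nth t != cyc_nth t.+2.
Proof.
move=> s_ge3; apply/eqP => /cyc_nth_inj /eqP.
by rewrite -addn2 -{1}(addn0 t) eqn_modDl mod0n modn_small.
Qed.

End CyclicIndexing.

Lemma mulmx_entry_supp2 (R : pzSemiRingType) m n p
    (M : 'M[R]_(m, n)) (N : 'M[R]_(n, p)) i j a b :
  a != b -> (forall k, k != a -> k != b -> M i k * N k j = 0) ->
  (M *m N) i j = M i a * N a j + M i b * N b j.
Proof.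
move=> ab supp; rewrite mxE (bigD1 a) // (bigD1 b) 1?eq_sym //=.
by rewrite big1 ?addr0 ?addrA // => k /andP[kb ka]; apply: supp.
Qed.

Section PatternSupport.

Variables (R : realType) (n : nat).

Lemma SG_support (G : rel 'I_n) (A : 'M[R]_n) a b :
  SG G A -> a != b -> A a b != 0 -> G a b.
Proof. by case=> _ AG ab; rewrite AG. Qed.

Lemma S0bar_support (H : rel 'I_n) (X : 'M[R]_n) a b : S0bar H X -> X a b != 0 -> H a b.
Proof. by case=> _ XH; apply: contraR => Hab; rewrite XH ?Hab ?orbT. Qed.

Lemma S0bar_sym (H : rel 'I_n) (X : 'M[R]_n) : S0bar H X -> forall a b, X a b = X b a.
Proof. by case=> Xt _ a b; rewrite -[in RHS]Xt mxE. Qed.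

Lemma S0bar_add_cycle_edges (Gl : rel 'I_n) (s : seq 'I_n) (X : 'M[R]_n) :
  S0bar (gcompl Gl) X ->
  (forall x y, x \in s -> y \in s -> gcompl Gl x y -> X x y = 0) ->
  S0bar (gcompl (add_cycle_edges Gl s)) X.
Proof.
move=> [Xt XGl] Xs; split=> // x y.
have [<- _|xy] := eqVneq x y; first by apply: XGl; rewrite eqxx.
rewrite /= {1}/gcompl xy negbK => /orP[Glxy|/and3P[xs ys gxy]]; last exact: Xs.
by apply: XGl; rewrite /gcompl Glxy andbF orbT.
Qed.

End PatternSupport.

Section OddCycleForcing.

Variables (R : realType) (n : nat) (G Gl : rel 'I_n) (A X : 'M[R]_n).
Variables (i : 'I_n) (s : seq 'I_n).

Hypotheses (G_sym : symmetric G) (G_irr : irreflexive G).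
Hypotheses (G_Gl : edge_sub G Gl) (Gl_sym : symmetric Gl).
Hypotheses (A_G : SG G A) (X_Glc : S0bar (gcompl Gl) X) (AX_XA : A *m X = X *m A).
Hypotheses (s_uniq : uniq s) (s_ge3 : (3 <= size s)%N) (s_odd : odd (size s)).
Hypothesis s_nbhd : {subset s <= nbhd G i}.
Hypothesis s_cycle : forall x y, x \in s -> y \in s -> gcompl Gl x y <-> cyc_adj s x y.
Hypothesis s_focused : forall j, j \in s -> focused G Gl [set x in s] i j.

Local Notation v := (cyc_nth s i).

Let s_gt0 : (0 < size s)%N. Proof. exact: leq_trans s_ge3. Qed.

Let v_in_s t : v t \in s. Proof. exact: mem_cyc_nth. Qed.

Let G_i x : x \in s -> G i x.
Proof. by move/s_nbhd; rewrite inE. Qed.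

Let A_iv_neq0 t : A i (v t) != 0.
Proof.
have Giv := G_i (v_in_s t).
by rewrite A_G.2 ?Giv //; apply: contraTneq Giv => <-; rewrite G_irr.
Qed.

Lemma XA_cycle_entry_eq0 j : j \in s -> (X *m A) i j = 0.
Proof.
move=> js; rewrite mxE big1 // => k _.
have [Xik0|Xik] := eqVneq (X i k) 0; first by rewrite Xik0 mul0r.
have [Akj0|Akj] := eqVneq (A k j) 0; first by rewrite Akj0 mulr0.
have /andP[ik nGlik] := S0bar_support X_Glc Xik.
have k_foc : k \in cnbhd G j :&: ~: cnbhd Gl i.
  rewrite !inE negb_or (eq_sym k i) ik nGlik andbT.
  have [//|kj] := eqVneq k j; by rewrite G_sym (SG_support A_G kj Akj).
have := subsetP (s_focused js).2 _ k_foc.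
by rewrite inE => /G_i /G_Gl; rewrite (negPf nGlik).
Qed.

Lemma AX_cycle_entry t :
  (A *m X) i (v t.+1) =
    A i (v t) * X (v t) (v t.+1) + A i (v t.+2) * X (v t.+2) (v t.+1).
Proof.
apply: mulmx_entry_supp2 (cyc_nth_neqS2 i s_gt0 s_uniq t s_ge3) _ => k kt kt2.
have [Aik0|Aik] := eqVneq (A i k) 0; first by rewrite Aik0 mul0r.
have [Xkj0|Xkj] := eqVneq (X k (v t.+1)) 0; first by rewrite Xkj0 mulr0.
have gkj := S0bar_support X_Glc Xkj.
have k_foc : k \in cnbhd G i :&: ~: cnbhd Gl (v t.+1).
  move: (gkj) => /andP[kj nGlkj].
  rewrite !inE negb_or kj Gl_sym nGlkj andbT.
  have [//|ki] := eqVneq k i; by rewrite (SG_support A_G _ Aik) // eq_sym.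
have : k \in [set x in s] := subsetP (s_focused (v_in_s t.+1)).1 _ k_foc.
rewrite inE => ks.
have [kE|kE] := cyc_adj_nthS s_gt0 s_uniq ((s_cycle ks (v_in_s _)).1 gkj).
- by move: kt; rewrite kE eqxx.
- by move: kt2; rewrite kE eqxx.
Qed.

Let w t := A i (v t) * A i (v t.+1) * X (v t) (v t.+1).

Lemma cycle_weightS t : w t.+1 = - w t.
Proof.
have := congr1 ( *%R (A i (v t.+1))) (AX_cycle_entry t).
rewrite AX_XA XA_cycle_entry_eq0 // mulr0 (S0bar_sym X_Glc (v t.+2)) => E.
by rewrite -[RHS]addr0 E /w; ring.
Qed.

Lemma X_cycle_edge_eq0 t : X (v t) (v t.+1) = 0.
Proof.
have w_per u : w (u + size s) = w u by rewrite /w -addSn !cyc_nthD_size.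
have /eqP := alternating_periodic_eq0 s_odd cycle_weightS w_per t.
by rewrite /w !mulf_eq0 !(negPf (A_iv_neq0 _)) => /eqP.
Qed.

Lemma X_cycle_adj_eq0 x y : x \in s -> y \in s -> gcompl Gl x y -> X x y = 0.
Proof.
move=> xs ys /(s_cycle xs ys) /(cyc_adj_nth i s_gt0) [t [[-> ->]|[-> ->]]].
- exact: X_cycle_edge_eq0.
- by rewrite (S0bar_sym X_Glc) X_cycle_edge_eq0.
Qed.

End OddCycleForcing.

Theorem lemma3p8 (R : realType) (n : nat) (G Gl : rel 'I_n)
  (A X : 'M[R]_n) (i : 'I_n) (s : seq 'I_n) :
  simple_graph G -> simple_graph Gl -> edge_sub G Gl ->
  SG G A -> S0bar (gcompl Gl) X -> A *m X - X *m A = 0 ->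
  odd_cycle_component (gcompl Gl) (nbhd G i) s ->
  (forall j, j \in s -> focused G Gl [set x in s] i j) ->
  S0bar (gcompl (add_cycle_edges Gl s)) X.
Proof.
move=> [G_sym G_irr] [Gl_sym _] G_Gl A_G X_Glc /subr0_eq AX_XA.
move=> [[s_uniq s_ge3 s_odd s_nbhd] [s_cycle _]] s_focused.
apply: (S0bar_add_cycle_edges X_Glc).
exact: (X_cycle_adj_eq0 G_sym G_irr G_Gl Gl_sym A_G X_Glc AX_XA s_uniq s_ge3 s_odd
  s_nbhd s_cycle s_focused).
Qed.
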